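(* For every connected graph $H$ with at least two vertices, every connected $H$-graph $G$ satisfies $\mathsf{lpt}(G) \le 4(\mathsf{tw}(H)+1)|E(H)|$.
   Context: All graphs are finite and simple. A subdivision $H'$ of $H$ is obtained by replacing each edge $xy$ of $H$ by a path from $x$ to $y$ of length at least one, with the interiors of these paths pairwise disjoint and anticomplete. A graph $G$ is an $H$-graph if there exist a subdivision $H^{\Phi}$ of $H$ and a map $\Phi: V(G)\to 2^{V(H^{\Phi})}$ such that each $H^{\Phi}[\Phi(v)]$ is connected and, for distinct $u,v\in V(G)$, $uv\in E(G)$ iff $\Phi(u)\cap\Phi(v)\neq\emptyset$. $\mathsf{tw}(H)$ is the treewidth of $H$. A longest path of a connected graph $G$ is a path of maximum length in $G$; a longest path transversal is a set of vertices meeting every longest path; $\mathsf{lpt}(G)$ is the minimum cardinality of a longest path transversal of $G$. *)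

From HB Require Import structures.
From mathcomp Require Import all_boot.
From mathcomp Require Import boolp.

Set Implicit Arguments.
Unset Strict Implicit.
Unset Printing Implicit Defensive.

Definition simple_graph (T : finType) (e : rel T) : Prop :=
  symmetric e /\ irreflexive e.

Definition connected_graph (T : finType) (e : rel T) : Prop :=
  forall x y : T, connect e x y.

Definition num_edges (T : finType) (e : rel T) : nat :=
  #|[set A : {set T} | [exists x, exists y, e x y && (A == [set x; y])]]|.

Definition induced (T : finType) (e : rel T) (A : {set T}) : rel T :=
  [rel x y | [&& e x y, x \in A & y \in A]].

Definition connected_set (T : finType) (e : rel T) (A : {set T}) : Prop :=
  A != set0 /\ {in A &, forall x y, connect (induced e A) x y}.

Definition acyclic (I : finType) (t : rel I) : Prop :=
  ~ exists s : seq I, [/\ 3 <= size s, uniq s & cycle t s].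

Definition is_tree (I : finType) (t : rel I) : Prop :=
  [/\ 0 < #|I|, simple_graph t, connected_graph t & acyclic t].

Definition tree_decomposition (T : finType) (e : rel T)
    (I : finType) (t : rel I) (B : I -> {set T}) : Prop :=
  [/\ is_tree t,
      forall x : T, exists i, x \in B i,
      forall x y : T, e x y -> exists i, (x \in B i) && (y \in B i)
    & forall x : T, connected_set t [set i | x \in B i]].

Definition td_width (T I : finType) (B : I -> {set T}) : nat :=
  (\max_(i : I) #|B i|).-1.

Definition has_tw_le (T : finType) (e : rel T) (k : nat) : Prop :=
  exists (I : finType) (t : rel I) (B : I -> {set T}),
    tree_decomposition e t B /\ td_width B <= k.

Lemma has_tw_le_ex (T : finType) (e : rel T) :
  exists k, `[< has_tw_le e k >].
Proof.
exists #|T|.-1; apply/asboolP.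
exists unit, (fun _ _ => false), (fun _ => setT); split; last first.
  by rewrite /td_width big_const card_unit /= cardsT.
split.
- split.
  + by rewrite card_unit.
  + by split.
  + by move=> [] []; apply: connect0.
  + move=> [s [s3 us _]].
    have := uniq_leq_size us (fun x _ => mem_enum predT x).
    by rewrite -cardE card_unit => /(leq_trans s3).
- by move=> x; exists tt; rewrite in_setT.
- by move=> x y _; exists tt; rewrite !in_setT.
- move=> x; split.
    by apply/set0Pn; exists tt; rewrite inE in_setT.
  by move=> [] [] _ _; apply: connect0.
Qed.

Definition treewidth (T : finType) (e : rel T) : nat := ex_minn (has_tw_le_ex e).

(** Paths (nonempty sequences of distinct vertices, consecutive ones adjacent);
    the length of path p is size p - 1. *)
Definition gpath (T : finType) (e : rel T) (p : seq T) : bool :=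
  if p is x :: q then path e x q && uniq p else false.

Definition longest_path (T : finType) (e : rel T) (p : seq T) : Prop :=
  gpath e p /\ forall q, gpath e q -> size q <= size p.

Definition lp_transversal (T : finType) (e : rel T) (S : {set T}) : Prop :=
  forall p, longest_path e p -> has (mem S) p.

Lemma lpt_ex (T : finType) (e : rel T) :
  exists k, [exists S : {set T}, (#|S| == k) && `[< lp_transversal e S >]].
Proof.
exists #|T|; apply/existsP; exists setT; rewrite cardsT eqxx /=.
apply/asboolP => -[|x p] [] //= _ _.
by rewrite in_setT.
Qed.

Definition lpt (T : finType) (e : rel T) : nat := ex_minn (lpt_ex e).

(** Subdivisions.  eS is a subdivision of eH if there are an injective
    embedding f of the branch vertices and, for every edge xy of H, a path
    f x :: P x y (of length >= 1) from f x to f y, with P y x the reverse path,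
    such that interiors avoid the branch vertices and are pairwise disjoint,
    every vertex of S lies on one of these paths or is a branch vertex, and the
    edges of S are exactly the consecutive pairs along these paths (so the
    interiors are pairwise anticomplete). *)
Definition adjacent_in (U : eqType) (u v : U) (p : seq U) : Prop :=
  exists p1 p2, p = p1 ++ u :: v :: p2.

Definition subdivision (T U : finType) (eH : rel T) (eS : rel U) : Prop :=
  exists (f : T -> U) (P : T -> T -> seq U),
  [/\ injective f,
      forall x y, eH x y ->
        [/\ P x y != [::], last (f x) (P x y) = f y,
            uniq (f x :: P x y), path eS (f x) (P x y)
          & f y :: P y x = rev (f x :: P x y)],
      forall x y u, eH x y -> u \in P x y -> u != f y ->
        (forall z, u != f z) /\
        (forall x' y', eH x' y' -> u \in f x' :: P x' y' ->
            (x' = x /\ y' = y) \/ (x' = y /\ y' = x)),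
      forall u, (exists z, u = f z) \/ (exists x y, eH x y /\ u \in P x y)
    & forall u v, eS u v <-> exists x y, eH x y /\ adjacent_in u v (f x :: P x y)].

Definition H_graph (T V : finType) (eH : rel T) (eG : rel V) : Prop :=
  exists (U : finType) (eS : rel U) (Phi : V -> {set U}),
  [/\ subdivision eH eS,
      forall v, connected_set eS (Phi v)
    & forall u v, u != v -> (eG u v <-> Phi u :&: Phi v != set0)].

From HB Require Import structures.
From mathcomp Require Import all_boot boolp zify.

Set Implicit Arguments.
Unset Strict Implicit.
Unset Printing Implicit Defensive.

(* Along the subdivided path of an edge
   xy of H, connected models behave like intervals: one contained in the interior is an
   interval, and one that meets the interior at t and contains a branch vertex covers a
   whole segment from an end of the path up to t.  For each oriented edge xy pick three
   vertices of G: one whose model covers the longest initial segment of the path from x,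
   and, at a point s shared by the models of all longest paths lying in the interior of
   the path (pairwise intersecting intervals have a common point), the two whose models
   reach farthest from s towards each end.  Every longest path p then has a vertex v such
   that each t in the model of v lies in the model of a picked vertex c whose model also
   meets that of v.  Taking t common to v and its neighbour w on p, c could be inserted
   between v and w unless c lies on p.  So the 6|E(H)| picked vertices meet every longest
   path, and 6 <= 4(tw(H)+1) since H has an edge. *)

Section SeqFacts.
Variable U : eqType.

Lemma index_consecutive (s1 s2 : seq U) a b :
  uniq (s1 ++ a :: b :: s2) ->
  index b (s1 ++ a :: b :: s2) = (index a (s1 ++ a :: b :: s2)).+1.
Proof.
rewrite cat_uniq /= !negb_or => /and3P [_ /andP [a_s1 /andP [b_s1 _]]].
move=> /and3P [/andP [ab _] _ _].
by rewrite !index_cat (negbTE a_s1) (negbTE b_s1) /= eqxx (negbTE ab) eqxx addn1 addn0.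
Qed.

Lemma rev_consecutive (s1 s2 : seq U) a b :
  rev (s1 ++ a :: b :: s2) = rev s2 ++ b :: a :: rev s1.
Proof. by rewrite rev_cat !rev_cons -!cats1 -!catA. Qed.

Lemma exists_consecutive (s : seq U) v : v \in s -> 1 < size s ->
  exists s1 s2 w, s = s1 ++ v :: w :: s2 \/ s = s1 ++ w :: v :: s2.
Proof.
case/splitPr => s1 [|w s2] size_s; last by exists s1, s2, w; left.
case/lastP: s1 size_s => [|s1 w] //= _.
by exists s1, [::], w; right; rewrite cat_rcons.
Qed.

Lemma all_take_find (a : pred U) s n :
  all a (take n s) = (minn n (size s) <= find (predC a) s).
Proof.
have [has_na|] := boolP (has (predC a) s).
  have find_lt : find (predC a) s < size s by rewrite -has_find.
  by rewrite -[all _ _]negbK -has_predC has_take // -leqNgt; lia.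
rewrite has_predC negbK => all_a; rewrite hasNfind ?has_predC ?all_a // geq_minr.
by apply/allP => z /mem_take; exact: (allP all_a).
Qed.

Definition covers_upto (A : pred U) (s : seq U) (t : U) :=
  exists n, t \in take n s /\ all A (take n s).

Lemma covers_upto_mem A s t : covers_upto A s t -> t \in A.
Proof. by case=> n [t_s /allP]; apply. Qed.

Lemma covers_upto_head A s t : covers_upto A s t -> head t s \in A.
Proof. by case: s => [|h s] [[|n] []] //= _ /andP []. Qed.

Lemma covers_upto_drop (A : pred U) (s : seq U) x0 i j :
  i <= j < size s -> (forall k, i <= k <= j -> nth x0 s k \in A) ->
  covers_upto A (drop i s) (nth x0 s j).
Proof.
move=> /andP [ij js] inA; exists (j - i).+1.
have size_take : size (take (j - i).+1 (drop i s)) = (j - i).+1.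
  by rewrite size_takel // size_drop; lia.
split.
  have -> : nth x0 s j = nth x0 (take (j - i).+1 (drop i s)) (j - i).
    by rewrite nth_take // nth_drop subnKC.
  by rewrite mem_nth // size_take.
apply/(all_nthP x0) => k; rewrite size_take => k_lt.
by rewrite nth_take // nth_drop; apply: inA; lia.
Qed.

Lemma covers_upto_rev_take (A : pred U) (s : seq U) x0 i j :
  i <= j < size s -> (forall k, i <= k <= j -> nth x0 s k \in A) ->
  covers_upto A (rev (take j.+1 s)) (nth x0 s i).
Proof.
move=> /andP [ij js] inA; exists (j - i).+1.
have size_take : size (take j.+1 s) = j.+1 by rewrite size_takel.
have size_rtake : size (take (j - i).+1 (rev (take j.+1 s))) = (j - i).+1.
  by rewrite size_takel // size_rev size_take; lia.
have nth_rtake k : k <= j - i ->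
    nth x0 (take (j - i).+1 (rev (take j.+1 s))) k = nth x0 s (j - k).
  move=> k_le; rewrite nth_take; last by lia.
  rewrite nth_rev size_take ?subSS ?nth_take //; lia.
split.
  have -> : nth x0 s i = nth x0 (take (j - i).+1 (rev (take j.+1 s))) (j - i).
    by rewrite nth_rtake // subKn.
  by rewrite mem_nth // size_rtake.
apply/(all_nthP x0) => k; rewrite size_rtake => k_lt.
by rewrite nth_rtake; [apply: inA | ]; lia.
Qed.

End SeqFacts.

Section Paths.
Variables (V : finType) (e : rel V).

Lemma gpathE s : gpath e s = [&& s != [::], sorted e s & uniq s].
Proof. by case: s. Qed.

Lemma sorted_cat_cons s x t :
  sorted e (s ++ x :: t) = sorted e (rcons s x) && path e x t.
Proof. by case: s => [|h s] //=; rewrite cat_path /= rcons_path andbA. Qed.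

Lemma gpath_edge s1 a b s2 : gpath e (s1 ++ a :: b :: s2) -> e a b.
Proof. by rewrite gpathE sorted_cat_cons /= => /and3P [_ /and3P [_ ->]]. Qed.

Lemma gpath_cat s x t : gpath e (rcons s x) -> gpath e (x :: t) ->
  ~~ has (mem s) (x :: t) -> gpath e (s ++ x :: t).
Proof.
rewrite !gpathE sorted_cat_cons rcons_uniq => /and3P [_ -> /andP [_ us]].
case/and3P=> _ /= -> uxt disj; rewrite cat_uniq us disj.
by move: uxt; case: s {us disj} => //= ? ? ->.
Qed.

Lemma gpath_insert s1 a b s2 u : gpath e (s1 ++ a :: b :: s2) ->
  u \notin s1 ++ a :: b :: s2 -> e a u -> e u b -> gpath e (s1 ++ a :: u :: b :: s2).
Proof.
rewrite !gpathE !sorted_cat_cons /= !cat_uniq /= !mem_cat !inE !negb_or.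
move=> /and5P [_ /and3P [-> _ ->] -> /and3P [-> -> s1_s2] /and3P [/andP [-> ->] -> ->]].
case/and4P=> -> ua -> -> -> ->; rewrite [a == u]eq_sym ua s1_s2 !andbT.
by case: s1 {s1_s2}.
Qed.

Lemma longest_path_detour s1 a b s2 u : longest_path e (s1 ++ a :: b :: s2) ->
  u \notin s1 ++ a :: b :: s2 -> e a u -> e u b -> False.
Proof.
move=> [gs maxs] us au ub; have := maxs _ (gpath_insert gs us au ub).
by rewrite !size_cat /=; lia.
Qed.

Lemma connected_neighbor : connected_graph e -> 1 < #|V| -> forall x, exists y, e x y.
Proof.
move=> e_conn /card_gt1P [a [b [_ _ ab]]] x.
have [x' x'x] : exists x', x' != x.
  by case: (eqVneq a x) => [<-|ax]; [exists b; rewrite eq_sym | exists a].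
case/connectP: (e_conn x x') => [[|y p]] /= => [_ x'E|/andP [xy _] _]; last by exists y.
by rewrite x'E eqxx in x'x.
Qed.

Lemma longest_path_size s : connected_graph e -> irreflexive e -> 1 < #|V| ->
  longest_path e s -> 1 < size s.
Proof.
move=> e_conn e_irr V_gt1 [_ max_s]; have [a [_ [_ _ _]]] := card_gt1P V_gt1.
have [b ab] := connected_neighbor e_conn V_gt1 a.
apply: leq_trans (max_s [:: a; b] _) => //=; rewrite ab inE !andbT.
by apply: contraTneq ab => ->; rewrite e_irr.
Qed.

Section Outside.
Variables A B : pred V.
Hypothesis AB_disj : forall z, z \in A -> z \notin B.
Let outside z := (z \notin A) && (z \notin B).

Lemma walk_bridge x w : x \in A -> path e x w -> last x w \in B ->
  exists a M b, [/\ a \in A, b \in B, path e a (rcons M b) & all outside M].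
Proof.
move=> xA; suff walk_from a M : a \in A -> all outside M -> path e a M ->
    path e (last a M) w -> last (last a M) w \in B ->
    exists a M b, [/\ a \in A, b \in B, path e a (rcons M b) & all outside M].
  exact: (walk_from x [::]).
elim: w a M => [|y w IH] a M aA outM aM /=.
  move=> _ lastB; have := mem_last a M; rewrite inE => /orP [/eqP lastE|lastM].
    by move: (AB_disj aA); rewrite -lastE lastB.
  by move/allP: outM => /(_ _ lastM) /andP [_]; rewrite lastB.
case/andP=> xy yw yB; case yB': (y \in B).
  by exists a, M, y; rewrite rcons_path aM xy.
case yA: (y \in A); first exact: (IH y [::]).
apply: (IH a (rcons M y)); rewrite ?last_rcons //.
  by rewrite all_rcons /outside yA yB' outM.
by rewrite rcons_path aM xy.
Qed.

Lemma gpath_bridge x y : x \in A -> y \in B -> connect e x y ->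
  exists a M b, [/\ a \in A, b \in B, gpath e (a :: rcons M b) & all outside M].
Proof.
move=> xA yB /connectP [w xw yE]; rewrite yE in yB.
have [a [M [b [aA bB aMb outM]]]] := walk_bridge xA xw yB.
case: (shortenP aMb) (last_rcons a M b) => p ap up sub_p.
case/lastP: p ap up sub_p => [|M' b'] ap up sub_p.
  by move=> /= ab; move: (AB_disj aA); rewrite ab bB.
rewrite last_rcons => b'E; subst b'.
exists a, M', b; split; rewrite //= ?ap ?up //; apply/allP => z zM'.
have := sub_p z; rewrite !mem_rcons !inE zM' orbT => /(_ isT) /orP [/eqP zb|].
  by move: up; rewrite /= rcons_uniq -zb zM' andbF.
by move/(allP outM).
Qed.

End Outside.

Hypothesis e_sym : symmetric e.

Lemma gpath_rev s : gpath e (rev s) = gpath e s.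
Proof.
rewrite !gpathE -!size_eq0 size_rev rev_uniq rev_sorted; congr [&& _, _ & _].
by case: s => //= x s; apply: eq_path => y z; exact: e_sym.
Qed.

Lemma gpath_split s1 a s2 :
  gpath e (s1 ++ a :: s2) -> gpath e (rcons s1 a) /\ gpath e (a :: s2).
Proof.
rewrite !gpathE sorted_cat_cons -cat_rcons cat_uniq => /and3P [_ /andP [-> a_s2]].
case/and3P=> -> disj us2 /=; rewrite a_s2 us2 -size_eq0 size_rcons !andbT; split=> //.
by apply: contra disj => a_s2'; apply/hasP; exists a; rewrite // mem_rcons mem_head.
Qed.

Lemma gpath_half_end s a : gpath e s -> a \in s ->
  exists X, [/\ gpath e (rcons X a), {subset X <= s} & size s <= (size X).*2.+1].
Proof.
move=> gs /splitPr s_split; case: s_split gs => s1 s2 /gpath_split [g1 g2].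
have [le21|lt12] := leqP (size s2) (size s1).
  exists s1; split=> // [z zs1|]; first by rewrite mem_cat zs1.
  by rewrite size_cat /= -addnn; move: (size s1) (size s2) le21 => n1 n2; lia.
exists (rev s2); split.
- by rewrite -rev_cons gpath_rev.
- by move=> z; rewrite mem_rev mem_cat inE => ->; rewrite !orbT.
- by rewrite size_cat size_rev /= -addnn; move: (size s1) (size s2) lt12 => n1 n2; lia.
Qed.

Lemma gpath_half_start s a : gpath e s -> a \in s ->
  exists Y, [/\ gpath e (a :: Y), {subset Y <= s} & size s <= (size Y).*2.+1].
Proof.
move=> gs /(gpath_half_end gs) [X [gX sub_X sizeX]]; exists (rev X); split.
- by rewrite -rev_rcons gpath_rev.
- by move=> z; rewrite mem_rev; exact: sub_X.
- by rewrite size_rev.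
Qed.

Lemma longest_paths_meet s t : connected_graph e ->
  longest_path e s -> longest_path e t -> has (mem s) t.
Proof.
move=> e_conn [gs max_s] [gt max_t]; apply/negPn/negP => st_disj.
have size_st : size s = size t by apply/eqP; rewrite eqn_leq max_s // max_t.
case: s gs max_s st_disj size_st => [|x s] // gs max_s st_disj size_st.
case: t gt max_t st_disj size_st => [|y t] // gt max_t st_disj size_st.
have disj z : z \in x :: s -> z \notin y :: t.
  by move=> zs; apply: contra st_disj => zt; apply/hasP; exists z.
have [a [M [b [a_s b_t gM outM]]]] :=
  gpath_bridge disj (mem_head x s) (mem_head y t) (e_conn x y).
have [X [gX sub_X sizeX]] := gpath_half_end gs a_s.
have [Y [gY sub_Y sizeY]] := gpath_half_start gt b_t.
have outM' z : z \in M -> (z \notin x :: s) && (z \notin y :: t) by move/(allP outM).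
have gMY : gpath e (a :: M ++ b :: Y).
  apply: (gpath_cat (s := a :: M)) => //; apply/hasPn => z zbY.
  have zt : z \in y :: t by move: zbY; rewrite inE => /orP [/eqP ->|/sub_Y].
  rewrite inE negb_or; apply/andP; split.
    by apply: contraTneq zt => ->; exact: disj.
  by apply: contraTN zt => /outM' /andP [].
have gXMY : gpath e (X ++ a :: M ++ b :: Y).
  apply: gpath_cat => //; apply/hasPn => z; rewrite inE mem_cat inE.
  case/or4P=> [/eqP ->|/outM' /andP [zs _]|/eqP ->|/sub_Y zt].
  - by move: gX; rewrite gpathE rcons_uniq => /and3P [_ _ /andP []].
  - by apply: contra zs => /sub_X.
  - by apply: contraTN b_t => /sub_X; exact: disj.
  - by apply: contraTN zt => /sub_X; exact: disj.
have := max_s _ gXMY; move: sizeX sizeY size_st; rewrite !size_cat /= size_cat /= -!addnn.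
by move: (size s) (size t) (size X) (size Y) (size M) => ? ? ? ? ?; lia.
Qed.

Lemma induced_sym (A : {set V}) : symmetric (induced e A).
Proof. by move=> a b; rewrite /induced /= e_sym; congr (_ && _); apply: andbC. Qed.

Lemma connect_induced_sub (A B : {set V}) a b : A \subset B ->
  connect (induced e A) a b -> connect (induced e B) a b.
Proof.
move=> sAB; apply: connect_sub => u w /and3P [uw uA wA].
by apply: connect1; rewrite /induced /= uw !(subsetP sAB).
Qed.

Lemma connected_setU (A B : {set V}) : connected_set e A -> connected_set e B ->
  A :&: B != set0 -> connected_set e (A :|: B).
Proof.
move=> [_ A_conn] [_ B_conn] /set0Pn [t /setIP [tA tB]].
split; first by apply/set0Pn; exists t; rewrite inE tA.
have to_t a : a \in A :|: B -> connect (induced e (A :|: B)) a t.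
  case/setUP=> [aA|aB].
    by apply: (connect_induced_sub (subsetUl A B)); apply: A_conn.
  by apply: (connect_induced_sub (subsetUr A B)); apply: B_conn.
move=> a b aAB bAB; apply: connect_trans (to_t a aAB) _.
by rewrite (sym_connect_sym (@induced_sym _)); apply: to_t.
Qed.

End Paths.

Lemma helly_nat (J : Type) (K : J -> pred nat) m :
  (forall j n, K j n -> n <= m) ->
  (forall j i k n, i <= k <= n -> K j i -> K j n -> K j k) ->
  (forall j j', exists n, K j n && K j' n) ->
  exists s, forall j, K j s.
Proof.
move=> K_bound K_interval K_meet.
have [[j0 _]|noJ] := pselect (exists j : J, True); last first.
  by exists 0 => j; case: noJ; exists j.
have min_K j : exists2 i, K j i & forall k, K j k -> i <= k.
  have [n /andP [Kjn _]] := K_meet j j.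
  by have [i Kji min_i] := ex_minnP (ex_intro _ n Kjn); exists i.
pose is_min i := `[< exists j, K j i /\ forall k, K j k -> i <= k >].
have ex_min : exists i, is_min i.
  by have [i Ki min_i] := min_K j0; exists i; apply/asboolP; exists j0.
have min_bound i : is_min i -> i <= m by case/asboolP=> j [/K_bound].
have [s /asboolP [j' [Kj's min_j's]] s_max] := ex_maxnP ex_min min_bound.
exists s => j; have [i Kji min_ji] := min_K j.
have [n /andP [Kjn Kj'n]] := K_meet j j'.
apply: (K_interval j i s n) => //; rewrite min_j's // andbT.
by apply: s_max; apply/asboolP; exists j.
Qed.

Section PrefixGuard.
Variables (I U : finType) (A : I -> {set U}).

Definition prefix_guard (C : {set I}) (s : seq U) :=
  forall i t, covers_upto [in A i] s t -> exists2 c, c \in C & covers_upto [in A c] s t.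

Lemma prefix_guardS (C C' : {set I}) s : C \subset C' -> prefix_guard C s -> prefix_guard C' s.
Proof.
move=> sCC' guardC i t /guardC [c cC cov]; exists c => //; exact: subsetP cC.
Qed.

Lemma exists_prefix_guard s : exists C : {set I}, #|C| <= 1 /\ prefix_guard C s.
Proof.
have [noI|[i0 _]] := set_0Vmem [set: I].
  by exists set0; split=> [|i]; [rewrite cards0 | have := in_setT i; rewrite noI inE].
have [c _ c_max] := @arg_maxnP I i0 xpredT (fun c => find (predC [in A c]) s) isT.
exists [set c]; split=> [|i t [n [tn all_i]]]; first by rewrite cards1.
exists c; rewrite ?set11 //; exists n; split=> //.
by move: all_i; rewrite !all_take_find => le; apply: leq_trans le (c_max i isT).
Qed.

End PrefixGuard.

Lemma leq_card_bigcup (I T : finType) (D : {pred I}) (F : I -> {set T}) :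
  #|\bigcup_(i in D) F i| <= \sum_(i in D) #|F i|.
Proof.
elim/big_rec2: _ => [|i n X _ le_Xn]; first by rewrite cards0.
by rewrite (leq_trans (leq_card_setU (F i) X).1) ?leq_add2l.
Qed.

Section EdgeCount.
Variables (T : finType) (e : rel T).
Hypothesis e_irr : irreflexive e.

Definition arcs : {set T * T} := [set xy | e xy.1 xy.2].

Lemma card_arcs : #|arcs| <= 2 * num_edges e.
Proof.
rewrite /num_edges; set E := [set A : {set T} | _].
pose fiber (A : {set T}) := [set xy : T * T | [&& xy.1 \in A, xy.2 \in A & xy.1 != xy.2]].
have arcs_fibers : arcs \subset \bigcup_(A in E) fiber A.
  apply/subsetP => -[x y]; rewrite inE /= => xy; apply/bigcupP; exists [set x; y].
    by rewrite inE; apply/existsP; exists x; apply/existsP; exists y; rewrite xy eqxx.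
  by rewrite inE /= !inE !eqxx orbT /=; apply: contraTneq xy => ->; rewrite e_irr.
apply: leq_trans (subset_leq_card arcs_fibers) _.
apply: leq_trans (leq_card_bigcup _ _) _.
rewrite mulnC -sum_nat_const; apply: leq_sum => A /[!inE] /existsP [x /existsP [y]].
case/andP=> _ /eqP ->.
have : fiber [set x; y] \subset [set (x, y); (y, x)].
  apply/subsetP => -[u v]; rewrite !inE /= !xpair_eqE.
  by case/and3P=> /orP [] /eqP -> /orP [] /eqP ->; rewrite !eqxx ?orbT.
by move/subset_leq_card/leq_trans; apply; rewrite cards2 ltnS leq_b1.
Qed.

Lemma treewidth_gt0 x y : e x y -> 0 < treewidth e.
Proof.
move=> xy; rewrite /treewidth; case: (ex_minnP (has_tw_le_ex e)) => k.
move=> /asboolP [I [t [B [[_ _ edge_bag _] width_k]]]] _.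
have [i /andP [xBi yBi]] := edge_bag x y xy.
have two_le : 2 <= #|B i|.
  have <- : #|[set x; y]| = 2 by rewrite cards2; case: eqP xy => // ->; rewrite e_irr.
  by apply: subset_leq_card; apply/subsetP => z /set2P [] ->.
have := leq_bigmax (F := fun i => #|B i|) i; rewrite /td_width in width_k.
by move: (\max_(i0 : I) #|B i0|) width_k => n; lia.
Qed.

End EdgeCount.

Lemma lpt_le_card (V : finType) (e : rel V) (S : {set V}) :
  lp_transversal e S -> lpt e <= #|S|.
Proof.
move=> S_tr; rewrite /lpt; case: (ex_minnP (lpt_ex e)) => m _; apply.
by apply/existsP; exists S; rewrite eqxx; apply/asboolP.
Qed.

Section Subdivision.
Variables (T U : finType) (eH : rel T) (eS : rel U) (f : T -> U) (P : T -> T -> seq U).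
Hypothesis eH_sym : symmetric eH.
Hypothesis P_path : forall x y, eH x y ->
  [/\ P x y != [::], last (f x) (P x y) = f y, uniq (f x :: P x y),
      path eS (f x) (P x y) & f y :: P y x = rev (f x :: P x y)].
Hypothesis P_interior : forall x y u, eH x y -> u \in P x y -> u != f y ->
  (forall z, u != f z) /\
  (forall x' y', eH x' y' -> u \in f x' :: P x' y' ->
     (x' = x /\ y' = y) \/ (x' = y /\ y' = x)).
Hypothesis P_cover : forall u, (exists z, u = f z) \/ (exists x y, eH x y /\ u \in P x y).
Hypothesis eS_P : forall u v,
  eS u v <-> exists x y, eH x y /\ adjacent_in u v (f x :: P x y).
Hypothesis eH_neighbor : forall x, exists y, eH x y.

Definition spath x y := f x :: P x y.
Definition slen x y := size (P x y).
Definition sinterior x y u := (u \in P x y) && (u != f y).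
Definition spos x y u := index u (spath x y).
(* Beyond [slen x y] this is the junk value [f x]. *)
Definition svert x y i := nth (f x) (spath x y) i.

Lemma size_spath x y : size (spath x y) = (slen x y).+1.
Proof. by []. Qed.

Lemma eS_sym : symmetric eS.
Proof.
suff eS_rev u v : eS u v -> eS v u by move=> u v; apply/idP/idP => /eS_rev.
case/eS_P=> x [y [xy [s1 [s2 Pxy]]]]; apply/eS_P; exists y, x.
split; first by rewrite eH_sym.
exists (rev s2), (rev s1); have [_ _ _ _ ->] := P_path xy.
by rewrite Pxy rev_consecutive.
Qed.

Section Edge.
Variables x y : T.
Hypothesis xy : eH x y.

Lemma spath_uniq : uniq (spath x y).
Proof. by case: (P_path xy). Qed.

Lemma svert_slen : svert x y (slen x y) = f y.
Proof.
have [_ Plast _ _ _] := P_path xy.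
by rewrite /svert /slen -Plast -[size (P x y)]/((size (spath x y)).-1) nth_last.
Qed.

Lemma spath_rev : spath y x = rev (spath x y).
Proof. by case: (P_path xy). Qed.

Lemma sinterior_branch u z : sinterior x y u -> u != f z.
Proof. by case/andP=> uP uy; case: (P_interior xy uP uy). Qed.

Lemma sinterior_spath u : sinterior x y u -> u \in spath x y.
Proof. by case/andP=> uP _; rewrite inE uP orbT. Qed.

Lemma svert_spos u : u \in spath x y -> svert x y (spos x y u) = u.
Proof. exact: nth_index. Qed.

Lemma spos_svert i : i <= slen x y -> spos x y (svert x y i) = i.
Proof. by move=> le_i; rewrite /spos /svert index_uniq // spath_uniq. Qed.

Lemma spos_le u : u \in spath x y -> spos x y u <= slen x y.
Proof. by move=> us; rewrite /spos -ltnS -size_spath index_mem. Qed.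

Lemma sinterior_spos u : sinterior x y u -> 0 < spos x y u < slen x y.
Proof.
move=> u_int; have us := sinterior_spath u_int; apply/andP; split.
  rewrite lt0n; apply: contraNneq (sinterior_branch x u_int) => pos0.
  by rewrite -(svert_spos us) pos0.
rewrite ltn_neqAle spos_le // andbT; apply: contraNneq (sinterior_branch y u_int) => posl.
by rewrite -(svert_spos us) posl svert_slen.
Qed.

Lemma sinterior_svert i : 0 < i < slen x y -> sinterior x y (svert x y i).
Proof.
case: i => [|i] // /andP [_ lt_i]; have le_i : i < slen x y := ltnW lt_i.
apply/andP; split; first by rewrite /svert /spath /= mem_nth.
rewrite -svert_slen; apply: contraTneq lt_i => /(congr1 (spos x y)).
by rewrite !spos_svert // => ->; rewrite ltnn.
Qed.

Lemma sinterior_svert_le i : sinterior x y (svert x y i) -> i <= slen x y.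
Proof.
rewrite leqNgt; apply: contraL => lt_i.
by rewrite /svert nth_default ?size_spath //; apply/negP => /(sinterior_branch x); rewrite eqxx.
Qed.

Lemma spos_end u : u \in spath x y -> ~~ sinterior x y u ->
  spos x y u = 0 \/ spos x y u = slen x y.
Proof.
move=> us u_ext; have := spos_le us; rewrite leq_eqVlt => /orP [/eqP|lt_u]; first by right.
left; apply/eqP; rewrite -leqn0 leqNgt; apply: contra u_ext => gt0.
by rewrite -(svert_spos us) sinterior_svert // gt0.
Qed.

Lemma sinterior_step u u' : sinterior x y u -> eS u u' ->
  u' \in spath x y /\ (spos x y u' = (spos x y u).+1 \/ (spos x y u').+1 = spos x y u).
Proof.
move=> u_int /eS_P [x' [y' [x'y' [s1 [s2 P'E]]]]].
have u_P' : u \in f x' :: P x' y' by rewrite P'E mem_cat !inE eqxx orbT.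
case/andP: (u_int) => uP uy.
case: (P_interior xy uP uy) => _ /(_ _ _ x'y' u_P') [[x'E y'E]|[x'E y'E]]; subst x' y'.
  have := spath_uniq; rewrite /spos /spath P'E => uniq_s.
  by rewrite mem_cat !inE eqxx !orbT index_consecutive //; split=> //; left.
have xyE : spath x y = rev s2 ++ u' :: u :: rev s1.
  by rewrite -[spath x y]revK -spath_rev /spath P'E rev_consecutive.
have := spath_uniq; rewrite /spos xyE => uniq_s.
by rewrite mem_cat !inE eqxx !orbT index_consecutive //; split=> //; right.
Qed.

Lemma walk_interval (A : {set U}) a p : a \in A -> {in A, forall u, sinterior x y u} ->
  path (induced eS A) a p -> forall i,
  minn (spos x y a) (spos x y (last a p)) <= i <= maxn (spos x y a) (spos x y (last a p)) ->
  svert x y i \in A.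
Proof.
elim: p a => [|b p IH] a aA A_int /=.
  move=> _ i; rewrite minnn maxnn -eqn_leq => /eqP <-.
  by rewrite svert_spos // sinterior_spath // A_int.
case/andP=> /and3P [ab _ bA] bp i i_range.
have [_ step] := sinterior_step (A_int _ aA) ab.
have [->|ne] := eqVneq i (spos x y a); first by rewrite svert_spos ?sinterior_spath ?A_int.
by apply: (IH b bA A_int bp); lia.
Qed.

Lemma walk_exit (A : {set U}) a p : a \in A -> path (induced eS A) a p ->
  sinterior x y a -> ~~ sinterior x y (last a p) ->
  (forall i, i <= spos x y a -> svert x y i \in A) \/
  (forall i, spos x y a <= i <= slen x y -> svert x y i \in A).
Proof.
elim: p a => [|b p IH] a aA /=; first by move=> _ ->.
case/andP=> /and3P [ab _ bA] bp a_int last_ext.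
have [bs step] := sinterior_step a_int ab.
have a_pos := sinterior_spos a_int.
have aE := svert_spos (sinterior_spath a_int); have bE := svert_spos bs.
have [b_int|b_ext] := boolP (sinterior x y b).
  case: (IH b bA bp b_int last_ext) => [left_b|right_b]; [left|right] => i i_range;
    (have [->|ne] := eqVneq i (spos x y a); first by rewrite aE);
    [apply: left_b | apply: right_b]; lia.
case: (spos_end bs b_ext) => b_pos; [left|right] => i i_range;
  (have [->|ne] := eqVneq i (spos x y a); first by rewrite aE);
  (have -> : i = spos x y b by lia); by rewrite bE.
Qed.

Lemma connected_sinterior (A : {set U}) a : connected_set eS A ->
  (forall z, f z \notin A) -> a \in A -> sinterior x y a -> {in A, forall u, sinterior x y u}.
Proof.
case=> _ A_conn no_branch aA a_int b bA; apply/negPn/negP => b_ext.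
case/connectP: (A_conn a b aA bA) => p ap bE; rewrite bE in b_ext.
case: (walk_exit aA ap a_int b_ext) => [/(_ 0 isT)|/(_ (slen x y))].
  by rewrite (negbTE (no_branch x)).
have [_ /ltnW ->] := andP (sinterior_spos a_int).
by rewrite leqnn svert_slen (negbTE (no_branch y)) => /(_ isT).
Qed.

Lemma connected_interval (A : {set U}) a b : connected_set eS A ->
  {in A, forall u, sinterior x y u} -> a \in A -> b \in A ->
  forall i, spos x y a <= i <= spos x y b -> svert x y i \in A.
Proof.
case=> _ A_conn A_int aA bA i i_range.
case/connectP: (A_conn a b aA bA) => p ap bE.
by apply: (walk_interval aA A_int ap); rewrite -bE; lia.
Qed.

Lemma connected_covers_branch (A : {set U}) r z : connected_set eS A ->
  r \in A -> sinterior x y r -> f z \in A ->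
  covers_upto [in A] (spath x y) r \/ covers_upto [in A] (spath y x) r.
Proof.
case=> _ A_conn rA r_int fzA.
have r_pos := sinterior_spos r_int; have rE := svert_spos (sinterior_spath r_int).
case/connectP: (A_conn r (f z) rA fzA) => p rp fzE.
have last_ext : ~~ sinterior x y (last r p).
  by rewrite -fzE; apply/negP => /(sinterior_branch z); rewrite eqxx.
case: (walk_exit rA rp r_int last_ext) => [prefix|suffix]; [left|right].
  rewrite -rE -[spath x y]drop0; apply: covers_upto_drop => [|k /andP [_]]; last exact: prefix.
  by rewrite size_spath; lia.
rewrite spath_rev -rE -[spath x y]take_size size_spath.
by apply: covers_upto_rev_take => [|k]; [rewrite size_spath; lia | exact: suffix].
Qed.

Lemma connected_covers_interval (A : {set U}) s t : connected_set eS A ->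
  {in A, forall u, sinterior x y u} -> svert x y s \in A -> t \in A ->
  covers_upto [in A] (drop s (spath x y)) t \/
  covers_upto [in A] (rev (take s.+1 (spath x y))) t.
Proof.
move=> A_conn A_int sA tA; have s_le := sinterior_svert_le (A_int _ sA).
have ts := sinterior_spath (A_int _ tA); have tE := svert_spos ts.
have t_le := spos_le ts; have sE := spos_svert s_le.
have [le_ts|lt_st] := leqP (spos x y t) s; [right|left]; rewrite -tE.
  apply: covers_upto_rev_take => [|k k_range]; first by rewrite size_spath; lia.
  by apply: (connected_interval A_conn A_int tA sA); rewrite sE.
apply: covers_upto_drop => [|k k_range]; first by rewrite size_spath; lia.
by apply: (connected_interval A_conn A_int sA tA); rewrite sE.
Qed.

End Edge.

Lemma connected_covers_edge (A : {set U}) z t : connected_set eS A ->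
  f z \in A -> t \in A -> exists x y, eH x y /\ covers_upto [in A] (spath x y) t.
Proof.
move=> A_conn fzA tA.
have branch_case z' : f z' \in A ->
    exists x y, eH x y /\ covers_upto [in A] (spath x y) (f z').
  move=> fz'A; have [y z'y] := eH_neighbor z'; exists z', y; split=> //.
  by exists 1; rewrite /spath /= take0 inE eqxx fz'A.
case: (P_cover t) => [[z' tE]|[x [y [xy tP]]]].
  by rewrite tE in tA *; exact: branch_case.
have [tE|t_fy] := eqVneq t (f y); first by rewrite tE in tA *; exact: branch_case.
have t_int : sinterior x y t by rewrite /sinterior tP t_fy.
case: (connected_covers_branch xy A_conn tA t_int fzA) => cov.
  by exists x, y.
by exists y, x; rewrite eH_sym.
Qed.

Section Model.
Variables (V : finType) (eG : rel V) (Phi : V -> {set U}).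
Hypothesis Phi_conn : forall v, connected_set eS (Phi v).
Hypothesis eG_Phi : forall u v, u != v -> (eG u v <-> Phi u :&: Phi v != set0).
Hypothesis eG_sym : symmetric eG.
Hypothesis eG_irr : irreflexive eG.
Hypothesis eG_conn : connected_graph eG.

Lemma eG_meet u v : eG u v -> Phi u :&: Phi v != set0.
Proof. by move=> uv; apply/eG_Phi => //; apply: contraTneq uv => ->; rewrite eG_irr. Qed.

Definition model (Q : seq V) : {set U} := [set t | has (fun v => t \in Phi v) Q].

Lemma modelP Q t : reflect (exists2 v, v \in Q & t \in Phi v) (t \in model Q).
Proof. by rewrite inE; apply: hasP. Qed.

Lemma model_cons v Q : model (v :: Q) = Phi v :|: model Q.
Proof. by apply/setP => t; rewrite !inE. Qed.

Lemma connected_model Q : gpath eG Q -> connected_set eS (model Q).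
Proof.
case: Q => [|v Q] //= /andP [vQ _]; elim: Q v vQ => [|w Q IH] v /=.
  by rewrite model_cons setU0.
case/andP=> vw wQ; rewrite model_cons.
apply: connected_setU; [exact: eS_sym | exact: Phi_conn | exact: IH | ].
case/set0Pn: (eG_meet vw) => t /setIP [tv tw].
by apply/set0Pn; exists t; rewrite inE tv model_cons inE tw.
Qed.

Definition interior_lp x y Q :=
  longest_path eG Q /\ {in model Q, forall u, sinterior x y u}.

Lemma helly_position x y : eH x y ->
  exists s, forall Q, interior_lp x y Q -> svert x y s \in model Q.
Proof.
move=> xy; pose J := {Q : seq V | interior_lp x y Q}.
have [s all_s] : exists s, forall Q : J, svert x y s \in model (sval Q).
  apply: (helly_nat (m := slen x y)).
  - by move=> [Q [_ Q_int]] i /= /Q_int /(sinterior_svert_le xy).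
  - move=> [Q [[gQ _] Q_int]] i k n /= ikn iQ nQ.
    apply: (connected_interval xy (connected_model gQ) Q_int iQ nQ).
    by rewrite !(spos_svert xy) ?(sinterior_svert_le xy (Q_int _ iQ))
               ?(sinterior_svert_le xy (Q_int _ nQ)).
  - move=> [Q [lQ Q_int]] [Q' [lQ' Q'_int]] /=.
    case/hasP: (longest_paths_meet eG_sym eG_conn lQ' lQ) => v vQ vQ'.
    have [/set0Pn [t tv] _] := Phi_conn v.
    have tQ : t \in model Q by apply/modelP; exists v.
    have tQ' : t \in model Q' by apply/modelP; exists v.
    by exists (spos x y t); rewrite svert_spos ?tQ ?tQ' // sinterior_spath // Q_int.
by exists s => Q Q_int; apply: (all_s (exist _ Q Q_int)).
Qed.

Definition edge_guard x y (C : {set V}) :=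
  prefix_guard Phi C (spath x y) /\
  exists s, [/\ forall Q, interior_lp x y Q -> svert x y s \in model Q,
                prefix_guard Phi C (drop s (spath x y))
              & prefix_guard Phi C (rev (take s.+1 (spath x y)))].

Lemma exists_edge_guard x y :
  exists C : {set V}, #|C| <= 3 /\ (eH x y -> edge_guard x y C).
Proof.
have [xy|not_xy] := pselect (eH x y); last by exists set0; rewrite cards0; split=> // /not_xy.
have [C1 [C1_card C1_guard]] := exists_prefix_guard Phi (spath x y).
have [s s_helly] := helly_position xy.
have [C2 [C2_card C2_guard]] := exists_prefix_guard Phi (drop s (spath x y)).
have [C3 [C3_card C3_guard]] := exists_prefix_guard Phi (rev (take s.+1 (spath x y))).
exists (C1 :|: C2 :|: C3); split.
  apply: leq_trans (leq_card_setU _ _).1 _; rewrite -[3]/(2 + 1) leq_add //.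
  by apply: leq_trans (leq_card_setU _ _).1 _; rewrite -[2]/(1 + 1) leq_add.
move=> _; split; first by apply: prefix_guardS C1_guard; rewrite -setUA subsetUl.
exists s; split=> //; first apply: prefix_guardS C2_guard.
  exact: subset_trans (subsetUr C1 C2) (subsetUl _ C3).
by apply: prefix_guardS C3_guard; rewrite subsetUr.
Qed.

Lemma prefix_guard_meet C s v t : prefix_guard Phi C s -> covers_upto [in Phi v] s t ->
  exists2 c, c \in C & (t \in Phi c) && (Phi c :&: Phi v != set0).
Proof.
move=> C_guard cov_v; have [c cC cov_c] := C_guard v t cov_v.
exists c => //; rewrite (covers_upto_mem cov_c); apply/set0Pn; exists (head t s).
by rewrite inE (covers_upto_head cov_c) (covers_upto_head cov_v).
Qed.

Section Guards.
Variable guard : T * T -> {set V}.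
Hypothesis guardP : forall x y, eH x y -> edge_guard x y (guard (x, y)).

Definition guards : {set V} := \bigcup_(xy in arcs eH) guard xy.

Lemma card_guards : (forall xy, #|guard xy| <= 3) -> #|guards| <= 3 * #|arcs eH|.
Proof.
move=> guard_card; apply: leq_trans (leq_card_bigcup _ _) _.
by rewrite mulnC -sum_nat_const; apply: leq_sum.
Qed.

Lemma guard_sub_guards x y : eH x y -> guard (x, y) \subset guards.
Proof. by move=> xy; apply: bigcup_sup; rewrite inE. Qed.

Definition guarded v := {in Phi v, forall t,
  exists2 c, c \in guards & (t \in Phi c) && (Phi c :&: Phi v != set0)}.

Lemma branch_guarded v z : f z \in Phi v -> guarded v.
Proof.
move=> fzv t tv; have [x [y [xy cov]]] := connected_covers_edge (Phi_conn v) fzv tv.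
have [guard_xy _] := guardP xy.
have [c cg meet] := prefix_guard_meet guard_xy cov.
by exists c => //; apply: (subsetP (guard_sub_guards xy)).
Qed.

Lemma interior_guarded x y Q : eH x y -> interior_lp x y Q ->
  exists2 v, v \in Q & guarded v.
Proof.
move=> xy Q_int; have [_ [s [helly guard_r guard_l]]] := guardP xy.
case/modelP: (helly Q Q_int) => v vQ sv; exists v => // t tv.
have v_int : {in Phi v, forall u, sinterior x y u}.
  by move=> u uv; apply: Q_int.2; apply/modelP; exists v.
have sub := subsetP (guard_sub_guards xy).
case: (connected_covers_interval xy (Phi_conn v) v_int sv tv) => cov.
  by have [c /sub cg meet] := prefix_guard_meet guard_r cov; exists c.
by have [c /sub cg meet] := prefix_guard_meet guard_l cov; exists c.
Qed.

Lemma longest_path_guarded Q : longest_path eG Q -> exists2 v, v \in Q & guarded v.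
Proof.
move=> lQ.
have [[v [z [vQ fzv]]]|no_branch] := pselect (exists v z, v \in Q /\ f z \in Phi v).
  by exists v => //; apply: branch_guarded fzv.
have [v0 v0Q] : exists v0, v0 \in Q.
  by case: Q lQ {no_branch} => [|v0 Q] [] // _; exists v0; rewrite mem_head.
have [/set0Pn [t tv0] _] := Phi_conn v0.
have tQ : t \in model Q by apply/modelP; exists v0.
have Q_nobranch z : f z \notin model Q.
  by apply/negP => /modelP [v vQ fzv]; apply: no_branch; exists v, z.
case: (P_cover t) => [[z tE]|[x [y [xy tP]]]].
  by move: (Q_nobranch z); rewrite -tE tQ.
have t_int : sinterior x y t.
  by rewrite /sinterior tP; apply: contraNneq (Q_nobranch y) => <-.
apply: (interior_guarded xy); split=> //.
exact: (connected_sinterior xy (connected_model lQ.1) Q_nobranch tQ t_int).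
Qed.

Lemma guards_lp_transversal : 1 < #|V| -> lp_transversal eG guards.
Proof.
move=> V_gt1 Q lQ; apply/negPn/negP => Q_free.
have [v vQ v_guarded] := longest_path_guarded lQ.
have [s1 [s2 [w QE]]] :=
  exists_consecutive vQ (longest_path_size eG_conn eG_irr V_gt1 lQ).
have vw : eG v w by case: QE lQ => -> [/gpath_edge] //; rewrite eG_sym.
have wQ : w \in Q by case: QE => ->; rewrite mem_cat !inE eqxx ?orbT.
case/set0Pn: (eG_meet vw) => t /setIP [tv tw].
have [c c_guards /andP [tc meet_cv]] := v_guarded t tv.
have cQ : c \notin Q by apply: contra Q_free => cQ; apply/hasP; exists c.
have c_ne u : u \in Q -> c != u by move=> uQ; apply: contraNneq cQ => ->.
have cv : eG c v by apply/eG_Phi; [exact: c_ne|].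
have cw : eG c w.
  by apply/eG_Phi; [exact: c_ne | apply/set0Pn; exists t; rewrite inE tc tw].
have vc : eG v c by rewrite eG_sym.
have wc : eG w c by rewrite eG_sym.
by case: QE lQ cQ => -> lQ cQ; apply: (longest_path_detour lQ cQ).
Qed.

End Guards.

Lemma lpt_le_arcs : 1 < #|V| -> lpt eG <= 3 * #|arcs eH|.
Proof.
move=> V_gt1; have [guard guard_spec] := choice (fun xy => exists_edge_guard xy.1 xy.2).
apply: leq_trans (lpt_le_card (guards_lp_transversal _ V_gt1)) (card_guards _).
  by move=> x y; apply: (guard_spec (x, y)).2.
by move=> xy; apply: (guard_spec xy).1.
Qed.

End Model.

End Subdivision.

Lemma lpt_H_graph_le (T V : finType) (eH : rel T) (eG : rel V) :
  simple_graph eH -> connected_graph eH -> 2 <= #|T| ->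
  simple_graph eG -> connected_graph eG -> H_graph eH eG ->
  lpt eG <= 6 * num_edges eH.
Proof.
move=> [eH_sym eH_irr] eH_conn T_gt1 [eG_sym eG_irr] eG_conn.
case=> U [eS [Phi [[f [P [_ P_path P_int P_cover eS_P]]] Phi_conn eG_Phi]]].
have eH_nb := connected_neighbor eH_conn T_gt1.
have arcs_le := card_arcs eH_irr.
have [V_le1|V_gt1] := leqP #|V| 1; last first.
  apply: leq_trans (lpt_le_arcs eH_sym P_path P_int P_cover eS_P eH_nb
    Phi_conn eG_Phi eG_sym eG_irr eG_conn V_gt1) _.
  by rewrite -[6]/(3 * 2) -mulnA leq_mul2l arcs_le orbT.
have [x [_ [_ _ _]]] := card_gt1P T_gt1; have [y xy] := eH_nb x.
have arcs_gt0 : 0 < #|arcs eH| by apply/card_gt0P; exists (x, y); rewrite inE.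
apply: leq_trans (lpt_le_card (S := [set: V]) _) _.
  by case=> [|v p] [] //= _ _; rewrite in_setT.
by rewrite cardsT; lia.
Qed.

Unset Implicit Arguments.
Set Strict Implicit.

Theorem theorem4p2 (T : finType) (eH : rel T) (V : finType) (eG : rel V) :
  simple_graph eH -> connected_graph eH -> 2 <= #|T| ->
  simple_graph eG -> connected_graph eG -> H_graph eH eG ->
  lpt eG <= 4 * (treewidth eH).+1 * num_edges eH.
Proof.
move=> H_simple eH_conn T_gt1 G_simple eG_conn G_model.
apply: leq_trans (lpt_H_graph_le H_simple eH_conn T_gt1 G_simple eG_conn G_model) _.
have [x [_ [_ _ _]]] := card_gt1P T_gt1.
have [y xy] := connected_neighbor eH_conn T_gt1 x.
have := treewidth_gt0 H_simple.2 xy.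
by rewrite leq_mul2r => tw_gt0; apply/orP; right; lia.
Qed.
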